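(* Suppose $U\subseteq\mathbb{H}^d$ is $r$-connected and has subexponential growth. Then $U$ is a quasi-convex quasi-tree. Specifically, there is some $s=s(r)$ such that for every sequence $x=x_0,x_1,\dots,x_m=y$ in $U$ with $d(x_i,x_{i+1})\leq r$ for all $0\leq i<m$, and every point $p$ on the geodesic $[x,y]$, some $x_i$ is within distance $s$ of $p$.
   Context: $U$ is $r$-connected if any two points of $U$ are joined by a sequence in $U$ with consecutive distances $\leq r$. $U$ has subexponential growth if $\lim_{t\to\infty}\frac1t\log\sup_{u\in U}|U\cap B(u,t)|=0$ (for $U$ uniformly discrete), with distances in $\mathbb{H}^d$. *)

From Stdlib Require Import Reals List.
From Coquelicot Require Import Coquelicot.
Import ListNotations.
Open Scope R_scope.

(* Hyperboloid model of H^d inside R^{d+1}.  A point is a vector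
   x : nat -> R whose coordinates are x 0, x 1, ..., x d; coordinates of
   index > d are required to be 0, so each point has a unique representative. *)
Definition vec := nat -> R.

Definition minkowski (d : nat) (x y : vec) : R :=
  - x 0%nat * y 0%nat + fold_right Rplus 0 (map (fun i => x i * y i) (seq 1 d)).

Definition Hyp (d : nat) (x : vec) : Prop :=
  minkowski d x x = -1 /\ 0 < x 0%nat /\ (forall i, (d < i)%nat -> x i = 0).

Definition arcosh (z : R) : R := ln (z + sqrt (z * z - 1)).

Definition hdist (d : nat) (x y : vec) : R := arcosh (- minkowski d x y).

Definition on_geodesic (d : nat) (x y p : vec) : Prop :=
  exists gamma : R -> vec,
    (forall t, 0 <= t <= hdist d x y -> Hyp d (gamma t)) /\
    (forall s t, 0 <= s <= hdist d x y -> 0 <= t <= hdist d x y ->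
        hdist d (gamma s) (gamma t) = Rabs (s - t)) /\
    gamma 0 = x /\ gamma (hdist d x y) = y /\
    exists t, 0 <= t <= hdist d x y /\ gamma t = p.

Definition r_chain (d : nat) (r : R) (U : vec -> Prop) (x y : vec)
    (m : nat) (f : nat -> vec) : Prop :=
  f 0%nat = x /\ f m = y /\ (forall i, (i <= m)%nat -> U (f i)) /\
  (forall i, (i < m)%nat -> hdist d (f i) (f (S i)) <= r).

Definition r_connected (d : nat) (r : R) (U : vec -> Prop) : Prop :=
  forall x y, U x -> U y -> exists m f, r_chain d r U x y m f.

Definition uniformly_discrete (d : nat) (U : vec -> Prop) : Prop :=
  exists eps, 0 < eps /\
    forall x y, U x -> U y -> x <> y -> eps <= hdist d x y.

(* sup_{u in U} |U ∩ B(u,t)| as an extended real: the sup of the sizes of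
   finite (duplicate-free) lists of points of U ∩ B(u,t), over u in U. *)
Definition ball_count_sup (d : nat) (U : vec -> Prop) (t : R) : Rbar :=
  Lub_Rbar (fun k : R => exists u, U u /\
     exists l : list vec, NoDup l /\
       (forall z, In z l -> U z /\ hdist d u z <= t) /\
       k = INR (length l)).

Definition subexp_growth (d : nat) (U : vec -> Prop) : Prop :=
  (forall t, is_finite (ball_count_sup d U t)) /\
  is_lim (fun t => / t * ln (real (ball_count_sup d U t))) p_infty 0.

(* Suppose every point of an [r]-chain from [x] to [y] is farther than [s] from a
   point [p] of [[x,y]].  Let [n] be the unit tangent vector of [[x,y]] at [p] and
   [θ z = <z,n> / cosh d(z,p)]; then [θ x <= -1/2] and [θ y >= 1/2].  By the
   Cauchy-Schwarz inequality on the orthogonal complement of [p] and [n], one step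
   of the chain from [z] to [z'] changes [θ] by at most
   [e^r (sech d(z,p) + sech d(z',p))], so the points of the chain, taken without
   repetition, have total weight [Σ sech d(z,p) >= e^-r / 2].  Subexponential
   growth bounds the number of points of [U] with [cosh d(z,p)] in [[e^J, e^(J+1))]
   by [e^(J/8 + 1/4)], so the total weight of the points of [U] with
   [cosh d(z,p) >= e^J] is [O(e^(-J/2))]: a contradiction once [s] is large. *)

From Stdlib Require Import Reals Lra Lia Arith List Classical.
From Coquelicot Require Import Coquelicot.
Open Scope R_scope.

Definition lincomb (a : R) (u : vec) (b : R) (v : vec) : vec :=
  fun i => a * u i + b * v i.

Definition spatial_dot (d : nat) (u v : vec) : R :=
  fold_right Rplus 0 (map (fun i => u i * v i) (seq 1 d)).

Section Minkowski.

Variable d : nat.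

Lemma spatial_dot_lincomb_l a u b v w :
  spatial_dot d (lincomb a u b v) w = a * spatial_dot d u w + b * spatial_dot d v w.
Proof.
  unfold spatial_dot, lincomb.
  induction (seq 1 d); simpl; [ring | rewrite IHl; ring].
Qed.

Lemma spatial_dot_comm u v : spatial_dot d u v = spatial_dot d v u.
Proof.
  unfold spatial_dot.
  induction (seq 1 d); simpl; [ring | rewrite IHl; ring].
Qed.

Lemma spatial_dot_self_nonneg u : 0 <= spatial_dot d u u.
Proof. unfold spatial_dot. induction (seq 1 d); simpl; nra. Qed.

Lemma minkowski_spatial u v : minkowski d u v = - u 0%nat * v 0%nat + spatial_dot d u v.
Proof. reflexivity. Qed.

Lemma minkowski_comm u v : minkowski d u v = minkowski d v u.
Proof. rewrite !minkowski_spatial, spatial_dot_comm. ring. Qed.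

Lemma minkowski_lincomb_l a u b v w :
  minkowski d (lincomb a u b v) w = a * minkowski d u w + b * minkowski d v w.
Proof. rewrite !minkowski_spatial, spatial_dot_lincomb_l. unfold lincomb. ring. Qed.

Lemma minkowski_lincomb_r a u b v w :
  minkowski d w (lincomb a u b v) = a * minkowski d w u + b * minkowski d w v.
Proof. rewrite !(minkowski_comm w), minkowski_lincomb_l. reflexivity. Qed.

End Minkowski.

Lemma quadratic_nonneg_discriminant a b c :
  0 <= c -> (forall t, 0 <= a + 2 * b * t + c * t ^ 2) -> b ^ 2 <= a * c.
Proof.
  intros Hc H. destruct (Req_dec c 0) as [->|Hc0].
  - destruct (Req_dec b 0) as [->|Hb0]; [nra|].
    specialize (H (- (a + 1) / (2 * b))).
    replace (a + 2 * b * (- (a + 1) / (2 * b)) + 0 * (- (a + 1) / (2 * b)) ^ 2)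
      with (-1) in H by (field; auto).
    lra.
  - specialize (H (- b / c)).
    assert (a * c - b ^ 2 = c * (a + 2 * b * (- b / c) + c * (- b / c) ^ 2)) by (field; lra).
    nra.
Qed.

Lemma cauchy_schwarz_of_psd (F : vec -> vec -> R) :
  (forall u v, F u v = F v u) ->
  (forall a u b v w, F (lincomb a u b v) w = a * F u w + b * F v w) ->
  (forall w, 0 <= F w w) ->
  forall u v, F u v ^ 2 <= F u u * F v v.
Proof.
  intros Hsym Hlin Hpsd u v. apply quadratic_nonneg_discriminant; [apply Hpsd|].
  intro t. specialize (Hpsd (lincomb 1 u t v)).
  rewrite Hlin, (Hsym u), (Hsym v), !Hlin, (Hsym v u) in Hpsd. nra.
Qed.

Lemma spatial_cauchy_schwarz d u v :
  spatial_dot d u v ^ 2 <= spatial_dot d u u * spatial_dot d v v.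
Proof.
  apply cauchy_schwarz_of_psd.
  - apply spatial_dot_comm.
  - apply spatial_dot_lincomb_l.
  - apply spatial_dot_self_nonneg.
Qed.

(* In the application [c], [c'] are the [cosh] of the distances of two points
   to [p], [G], [G'] their coordinates along a unit tangent vector at [p] and
   [q] the [cosh] of their mutual distance; the last hypothesis is the
   Cauchy-Schwarz inequality for [frame_form]. *)
Lemma ratio_variation_bound c c' G G' q :
  1 <= c -> 1 <= c' -> 1 <= q -> 1 <= c ^ 2 - G ^ 2 -> 1 <= c' ^ 2 - G' ^ 2 ->
  (c * c' - G * G' - q) ^ 2 <= (c ^ 2 - G ^ 2 - 1) * (c' ^ 2 - G' ^ 2 - 1) ->
  Rabs (G' / c' - G / c) <= q * (/ c + / c').
Proof.
  intros Hc Hc' Hq Hk Hk' Hcs.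
  assert (HGG : Rabs (G * G') <= c * c').
  { rewrite <- (Rabs_pos_eq (c * c')) by nra. apply Rsqr_le_abs_0. unfold Rsqr.
    replace ((G * G') * (G * G')) with (G ^ 2 * G' ^ 2) by ring.
    replace ((c * c') * (c * c')) with (c ^ 2 * c' ^ 2) by ring.
    apply Rmult_le_compat; nra. }
  pose proof (Rle_abs (G * G')). pose proof (Rle_abs (- (G * G'))). rewrite Rabs_Ropp in *.
  assert (Hsq : (c * G' - G * c') ^ 2 <= (q * (c + c')) ^ 2).
  { set (X := c * c' - G * G') in *.
    assert (Hid : (c * G' - G * c') ^ 2 = X ^ 2 - (c ^ 2 - G ^ 2) * (c' ^ 2 - G' ^ 2))
      by (unfold X; ring).
    assert (X ^ 2 - (c ^ 2 - G ^ 2) * (c' ^ 2 - G' ^ 2)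
            <= 2 * q * X - q ^ 2 - (c ^ 2 - G ^ 2) - (c' ^ 2 - G' ^ 2) + 1) by lra.
    assert (q * X <= q * (2 * (c * c'))) by (apply Rmult_le_compat_l; unfold X; lra).
    assert (0 <= q * (q - 1) * (c * c')) by (apply Rmult_le_pos; nra).
    assert (4 * q * (c * c') <= (q * (c + c')) ^ 2)
      by (pose proof (pow2_ge_0 (q * (c - c'))); lra).
    pose proof (pow2_ge_0 q). lra. }
  replace (G' / c' - G / c) with ((c * G' - G * c') / (c * c')) by (field; lra).
  replace (q * (/ c + / c')) with (q * (c + c') / (c * c')) by (field; lra).
  unfold Rdiv. rewrite Rabs_mult, (Rabs_pos_eq (/ (c * c'))) by (left; apply Rinv_0_lt_compat; nra).
  apply Rmult_le_compat_r; [left; apply Rinv_0_lt_compat; nra|].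
  rewrite <- (Rabs_pos_eq (q * (c + c'))) by nra.
  apply Rsqr_le_abs_0. unfold Rsqr. nra.
Qed.

Section Hyperboloid.

Variable d : nat.

Lemma Hyp_self p : Hyp d p -> minkowski d p p = -1.
Proof. now intros [H _]. Qed.

(* [<w,w> + <w,p>^2] is the squared norm of the projection of [w] onto the
   tangent space [p^⊥], on which the Minkowski form is positive definite. *)
Lemma tangent_square_nonneg p w : Hyp d p -> 0 <= minkowski d w w + minkowski d w p ^ 2.
Proof.
  intros [Hpp [_ _]]. rewrite !minkowski_spatial in *.
  pose proof (spatial_cauchy_schwarz d w p).
  pose proof (spatial_dot_self_nonneg d w). pose proof (spatial_dot_self_nonneg d p).
  set (W := spatial_dot d w w) in *. set (S := spatial_dot d w p) in *.
  set (P := spatial_dot d p p) in *.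
  destruct (Req_dec P 0) as [HP0|HP0].
  - assert (S = 0) by (rewrite HP0 in *; nra). subst S. rewrite H2. nra.
  - set (X := - w 0%nat * w 0%nat + W + (- w 0%nat * p 0%nat + S) ^ 2).
    assert (HX : P * X = (P * W - S ^ 2) + (S * p 0%nat - w 0%nat * P) ^ 2).
    { unfold X. replace P with (p 0%nat * p 0%nat - 1) by lra. ring. }
    assert (0 <= P * X) by (rewrite HX; pose proof (pow2_ge_0 (S * p 0%nat - w 0%nat * P)); nra).
    apply (Rmult_le_reg_l P); lra.
Qed.

Lemma reverse_cauchy_schwarz u v : Hyp d u -> Hyp d v -> 1 <= - minkowski d u v.
Proof.
  intros Hu Hv. pose proof (tangent_square_nonneg u v Hu) as Hsq.
  rewrite (Hyp_self v Hv), (minkowski_comm d v u) in Hsq.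
  assert (minkowski d u v < 0).
  { destruct Hu as [Hu1 [Hu0 _]], Hv as [Hv1 [Hv0 _]]. rewrite !minkowski_spatial in *.
    pose proof (spatial_cauchy_schwarz d u v).
    pose proof (spatial_dot_self_nonneg d u). pose proof (spatial_dot_self_nonneg d v).
    assert (spatial_dot d u u = u 0%nat * u 0%nat - 1) by lra.
    assert (spatial_dot d v v = v 0%nat * v 0%nat - 1) by lra.
    assert (spatial_dot d u v ^ 2 < (u 0%nat * v 0%nat) ^ 2) by nra.
    assert (0 < u 0%nat * v 0%nat) by nra.
    nra. }
  nra.
Qed.

Definition tangent_form (p u v : vec) : R :=
  minkowski d u v + minkowski d u p * minkowski d v p.

Lemma tangent_form_cauchy_schwarz p u v :
  Hyp d p -> tangent_form p u v ^ 2 <= tangent_form p u u * tangent_form p v v.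
Proof.
  intro Hp. apply cauchy_schwarz_of_psd; intros; unfold tangent_form.
  - rewrite minkowski_comm. ring.
  - rewrite !minkowski_lincomb_l. ring.
  - pose proof (tangent_square_nonneg p w Hp). nra.
Qed.

Lemma cosh_triangle_bound p u z : Hyp d p -> Hyp d u -> Hyp d z ->
  - minkowski d u z <= 2 * (- minkowski d u p) * (- minkowski d z p).
Proof.
  intros Hp Hu Hz. pose proof (tangent_form_cauchy_schwarz p u z Hp) as Hcs.
  unfold tangent_form in Hcs. rewrite (Hyp_self u Hu), (Hyp_self z Hz) in Hcs.
  pose proof (reverse_cauchy_schwarz u p Hu Hp).
  pose proof (reverse_cauchy_schwarz z p Hz Hp).
  set (a := minkowski d u p) in *. set (b := minkowski d z p) in *.
  assert ((minkowski d u z + a * b) ^ 2 <= (a * b) ^ 2) by nra.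
  assert (0 < a * b) by nra.
  nra.
Qed.

(* With [n] a unit tangent vector at [p], this is the tangent form restricted
   to the orthogonal complement of [n] in [p^⊥]. *)
Definition frame_form (p n u v : vec) : R :=
  tangent_form p u v - minkowski d u n * minkowski d v n.

Definition tangent_ratio (p n z : vec) : R := minkowski d z n / - minkowski d z p.

Definition sech_dist (p z : vec) : R := / - minkowski d z p.

Lemma sech_dist_pos p z : Hyp d p -> Hyp d z -> 0 < sech_dist p z.
Proof.
  intros Hp Hz. apply Rinv_0_lt_compat.
  pose proof (reverse_cauchy_schwarz z p Hz Hp). lra.
Qed.

Section UnitTangent.

Variables p n : vec.
Hypothesis Hp : Hyp d p.
Hypothesis Hnn : minkowski d n n = 1.
Hypothesis Hnp : minkowski d n p = 0.

Lemma frame_form_self_nonneg w : 0 <= frame_form p n w w.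
Proof.
  pose proof (tangent_square_nonneg p (lincomb 1 w (- minkowski d w n) n) Hp) as H.
  rewrite !minkowski_lincomb_l, !minkowski_lincomb_r, (minkowski_comm d n w), Hnn, Hnp in H.
  unfold frame_form, tangent_form. nra.
Qed.

Lemma frame_form_cauchy_schwarz u v :
  frame_form p n u v ^ 2 <= frame_form p n u u * frame_form p n v v.
Proof.
  apply cauchy_schwarz_of_psd; [intros; unfold frame_form, tangent_form..|apply frame_form_self_nonneg].
  - rewrite (minkowski_comm d u0). ring.
  - rewrite !minkowski_lincomb_l. ring.
Qed.

Lemma tangent_ratio_lipschitz z z' : Hyp d z -> Hyp d z' ->
  Rabs (tangent_ratio p n z' - tangent_ratio p n z)
  <= - minkowski d z z' * (sech_dist p z + sech_dist p z').
Proof.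
  intros Hz Hz'.
  pose proof (frame_form_cauchy_schwarz z z') as Hcs.
  pose proof (frame_form_self_nonneg z) as Hzz.
  pose proof (frame_form_self_nonneg z') as Hzz'.
  unfold frame_form, tangent_form in *.
  rewrite (Hyp_self z Hz), (Hyp_self z' Hz') in *.
  apply ratio_variation_bound; try apply reverse_cauchy_schwarz; auto; nra.
Qed.

End UnitTangent.

End Hyperboloid.

Lemma exp_le_compat a b : a <= b -> exp a <= exp b.
Proof. intros [H| ->]; [left; apply exp_increasing|]; lra. Qed.

Lemma exp_1_gt_2 : 2 < exp 1.
Proof. pose proof (exp_ineq1 1 ltac:(lra)). lra. Qed.

Lemma sqrt_sq_sub_1_bounds w : 1 <= w ->
  sqrt (w * w - 1) * sqrt (w * w - 1) = w * w - 1 /\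
  0 <= sqrt (w * w - 1) /\ sqrt (w * w - 1) <= w.
Proof.
  intros. split; [apply sqrt_sqrt; nra | split; [apply sqrt_pos|]].
  apply Rle_trans with (sqrt (w * w)); [apply sqrt_le_1_alt; lra | rewrite sqrt_square; lra].
Qed.

Section Distance.

Variable d : nat.

Lemma exp_hdist u v : Hyp d u -> Hyp d v ->
  exp (hdist d u v) = - minkowski d u v + sqrt (- minkowski d u v * - minkowski d u v - 1).
Proof.
  intros Hu Hv. pose proof (reverse_cauchy_schwarz d u v Hu Hv).
  pose proof (sqrt_pos (- minkowski d u v * - minkowski d u v - 1)).
  unfold hdist, arcosh. rewrite exp_ln; lra.
Qed.

Lemma cosh_le_exp_of_hdist_le u v r : Hyp d u -> Hyp d v ->
  hdist d u v <= r -> - minkowski d u v <= exp r.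
Proof.
  intros Hu Hv H. pose proof (exp_hdist u v Hu Hv).
  destruct (sqrt_sq_sub_1_bounds _ (reverse_cauchy_schwarz d u v Hu Hv)) as [_ [Hs _]].
  pose proof (exp_le_compat _ _ H). lra.
Qed.

Lemma exp_lt_cosh_of_hdist_gt u v s : Hyp d u -> Hyp d v ->
  s + 1 < hdist d u v -> exp s < - minkowski d u v.
Proof.
  intros Hu Hv H. pose proof (exp_hdist u v Hu Hv).
  destruct (sqrt_sq_sub_1_bounds _ (reverse_cauchy_schwarz d u v Hu Hv)) as [_ [_ Hs]].
  pose proof (exp_increasing _ _ H). rewrite exp_plus in *.
  pose proof exp_1_gt_2. pose proof (exp_pos s). nra.
Qed.

Lemma hdist_le_of_cosh_le u v t : Hyp d u -> Hyp d v ->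
  2 * - minkowski d u v <= exp t -> hdist d u v <= t.
Proof.
  intros Hu Hv H. pose proof (exp_hdist u v Hu Hv).
  destruct (sqrt_sq_sub_1_bounds _ (reverse_cauchy_schwarz d u v Hu Hv)) as [_ [_ Hs]].
  destruct (Rle_dec (hdist d u v) t) as [|Hgt]; [assumption|].
  pose proof (exp_increasing t (hdist d u v) ltac:(lra)). lra.
Qed.

Lemma cosh_hdist_add x y p : Hyp d x -> Hyp d y -> Hyp d p ->
  hdist d x p + hdist d p y = hdist d x y ->
  - minkowski d x y = (- minkowski d x p) * (- minkowski d p y)
    + sqrt ((- minkowski d x p) * (- minkowski d x p) - 1)
      * sqrt ((- minkowski d p y) * (- minkowski d p y) - 1).
Proof.
  intros Hx Hy Hp H.
  assert (E : exp (hdist d x y) = exp (hdist d x p) * exp (hdist d p y))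
    by (rewrite <- H; apply exp_plus).
  rewrite !exp_hdist in E by assumption.
  set (C := - minkowski d x y) in *. set (A := - minkowski d x p) in *.
  set (B := - minkowski d p y) in *.
  destruct (sqrt_sq_sub_1_bounds C) as [HC1 [HC2 HC3]]; [apply reverse_cauchy_schwarz; auto|].
  destruct (sqrt_sq_sub_1_bounds A) as [HA1 [HA2 HA3]]; [apply reverse_cauchy_schwarz; auto|].
  destruct (sqrt_sq_sub_1_bounds B) as [HB1 [HB2 HB3]]; [apply reverse_cauchy_schwarz; auto|].
  set (sC := sqrt (C * C - 1)) in *. set (sA := sqrt (A * A - 1)) in *.
  set (sB := sqrt (B * B - 1)) in *.
  (* [e^{-t} = cosh t - sinh t], so the inverse exponentials multiply as well. *)
  assert (F : C - sC = (A - sA) * (B - sB)).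
  { transitivity ((C - sC) * ((A + sA) * (A - sA)) * ((B + sB) * (B - sB))).
    - replace ((A + sA) * (A - sA)) with 1 by nra.
      replace ((B + sB) * (B - sB)) with 1 by nra. ring.
    - transitivity ((C - sC) * (C + sC) * (A - sA) * (B - sB)); [rewrite E; ring|].
      replace ((C - sC) * (C + sC)) with 1 by nra. ring. }
  nra.
Qed.

End Distance.

Section Geodesic.

Variable d : nat.

Lemma on_geodesic_split x y p : on_geodesic d x y p ->
  Hyp d p /\ hdist d x p + hdist d p y = hdist d x y.
Proof.
  intros [gamma [Hhyp [Hisom [H0 [HD [t [Ht <-]]]]]]].
  set (D := hdist d x y) in *.
  split; [apply Hhyp; lra|].
  assert (Hxp : hdist d x (gamma t) = t).
  { rewrite <- H0, Hisom by lra. rewrite Rabs_left1 by lra. ring. }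
  assert (Hpy : hdist d (gamma t) y = D - t).
  { rewrite <- HD, Hisom by lra. rewrite Rabs_left1 by lra. ring. }
  lra.
Qed.

(* The unit tangent vector of [[x,y]] at [p] is [(y - x + (A - B) p) / (sinh a + sinh b)],
   where [A = cosh a], [B = cosh b], [a = d(x,p)] and [b = d(p,y)]. *)
Lemma geodesic_unit_tangent x y p : Hyp d x -> Hyp d y -> Hyp d p ->
  hdist d x p + hdist d p y = hdist d x y -> 1 < - minkowski d x p ->
  exists n, minkowski d n n = 1 /\ minkowski d n p = 0 /\
    minkowski d x n = - sqrt (- minkowski d x p * - minkowski d x p - 1) /\
    minkowski d y n = sqrt (- minkowski d p y * - minkowski d p y - 1).
Proof.
  intros Hx Hy Hp Hadd HA.
  pose proof (cosh_hdist_add d x y p Hx Hy Hp Hadd) as HC.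
  pose proof (reverse_cauchy_schwarz d p y Hp Hy) as HB.
  set (A := - minkowski d x p) in *. set (B := - minkowski d p y) in *.
  destruct (sqrt_sq_sub_1_bounds A) as [sA1 [sA2 _]]; [lra|].
  destruct (sqrt_sq_sub_1_bounds B) as [sB1 [sB2 _]]; [lra|].
  set (sA := sqrt (A * A - 1)) in *. set (sB := sqrt (B * B - 1)) in *.
  assert (HsA : 0 < sA) by nra.
  set (sg := sA + sB).
  assert (Hsg : 0 < sg) by (unfold sg; lra).
  assert (Exx := Hyp_self d x Hx). assert (Eyy := Hyp_self d y Hy).
  assert (Epp := Hyp_self d p Hp).
  assert (Exp : minkowski d x p = - A) by (unfold A; ring).
  assert (Eyp : minkowski d y p = - B) by (rewrite minkowski_comm; unfold B; ring).
  assert (Eyx : minkowski d y x = - (A * B + sA * sB)) by (rewrite minkowski_comm; lra).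
  assert (Exy : minkowski d x y = - (A * B + sA * sB)) by lra.
  set (n := lincomb (/ sg) (lincomb 1 y (-1) x) ((A - B) / sg) p).
  assert (Enp : minkowski d n p = 0).
  { unfold n. rewrite !minkowski_lincomb_l, Eyp, Exp, Epp. field. lra. }
  assert (Exn : minkowski d x n = - sA).
  { unfold n. rewrite !minkowski_lincomb_r, Exy, Exx, Exp. unfold sg.
    apply Rmult_eq_reg_r with (sA + sB); [|lra]. field_simplify; [|lra]. nra. }
  assert (Eyn : minkowski d y n = sB).
  { unfold n. rewrite !minkowski_lincomb_r, Eyy, Eyx, Eyp. unfold sg.
    apply Rmult_eq_reg_r with (sA + sB); [|lra]. field_simplify; [|lra]. nra. }
  exists n. repeat split; auto.
  unfold n at 1. rewrite !minkowski_lincomb_l, (minkowski_comm d p n), Enp, Eyn, Exn.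
  unfold sg. field. lra.
Qed.

End Geodesic.

Lemma loop_erasure {T : Type} (P : T -> Prop) (E : T -> T -> Prop) m (f : nat -> T) :
  (forall i, (i <= m)%nat -> P (f i)) ->
  (forall i, (i < m)%nat -> E (f i) (f (S i))) ->
  exists m' (g : nat -> T), g 0%nat = f 0%nat /\ g m' = f m /\
    (forall i, (i <= m')%nat -> P (g i)) /\
    (forall i, (i < m')%nat -> E (g i) (g (S i))) /\
    NoDup (map g (seq 0 (S m'))).
Proof.
  revert f. induction m as [m IH] using (well_founded_induction lt_wf). intros f HP HE.
  destruct (classic (exists i j, (i < j <= m)%nat /\ f i = f j)) as [[i [j [Hij Eij]]]|Hinj].
  - (* cut out the loop [f i, ..., f j] *)
    set (f' := fun k => if (k <=? i)%nat then f k else f (k + (j - i))%nat).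
    destruct (IH (m - (j - i))%nat ltac:(lia) f') as [m' [g [H0 [Hm [HPg [HEg Hnd]]]]]].
    + intros k Hk. unfold f'. destruct (Nat.leb_spec k i); apply HP; lia.
    + intros k Hk. unfold f'.
      destruct (Nat.leb_spec k i), (Nat.leb_spec (S k) i); try lia.
      * apply HE; lia.
      * replace k with i by lia. rewrite Eij.
        replace (S i + (j - i))%nat with (S j) by lia. apply HE; lia.
      * replace (S k + (j - i))%nat with (S (k + (j - i))) by lia. apply HE; lia.
    + exists m', g. repeat split; auto.
      rewrite Hm. unfold f'. destruct (Nat.leb_spec (m - (j - i)) i).
      * assert (j = m) by lia. subst j. now replace (m - (m - i))%nat with i by lia.
      * f_equal. lia.
  - exists m, f. repeat split; auto.
    apply NoDup_map_NoDup_ForallPairs; [|apply seq_NoDup].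
    intros i j Hi Hj Eij. apply in_seq in Hi, Hj.
    destruct (Nat.lt_total i j) as [L|[L|L]]; auto; exfalso; apply Hinj.
    + exists i, j. split; [lia|auto].
    + exists j, i. split; [lia|auto].
Qed.

Definition wsum {A : Type} (w : A -> R) (l : list A) : R :=
  fold_right (fun z s => w z + s) 0 l.

Lemma wsum_map {A B : Type} (w : B -> R) (g : A -> B) l :
  wsum w (map g l) = wsum (fun i => w (g i)) l.
Proof. induction l; simpl; congruence. Qed.

Lemma wsum_seq_S (w : nat -> R) n : wsum w (seq 0 (S n)) = wsum w (seq 0 n) + w n.
Proof.
  rewrite seq_S. unfold wsum. rewrite fold_right_app. simpl.
  induction (seq 0 n); simpl; [ring | rewrite IHl; ring].
Qed.

Lemma wsum_filter {A : Type} (w : A -> R) (b : A -> bool) l :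
  wsum w l = wsum w (filter b l) + wsum w (filter (fun z => negb (b z)) l).
Proof. induction l; simpl; [ring|]. destruct (b a); simpl; rewrite IHl; ring. Qed.

Lemma wsum_le_length {A : Type} (w : A -> R) l M :
  (forall z, In z l -> w z <= M) -> wsum w l <= INR (length l) * M.
Proof.
  induction l as [|a l IH]; intros H; [simpl; lra|].
  change (w a + wsum w l <= INR (S (length l)) * M). rewrite S_INR.
  pose proof (H a (or_introl eq_refl)).
  pose proof (IH (fun z Hz => H z (or_intror Hz))). lra.
Qed.

Lemma telescoping_bound (th w : nat -> R) q m :
  (forall i, (i < m)%nat -> Rabs (th (S i) - th i) <= q * (w i + w (S i))) ->
  (forall i, (i <= m)%nat -> 0 <= w i) -> 0 <= q ->
  th m - th 0%nat <= 2 * q * wsum w (seq 0 (S m)).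
Proof.
  intros Hstep Hw Hq.
  assert (Hind : forall k, (k <= m)%nat ->
            th k - th 0%nat <= q * (2 * wsum w (seq 0 (S k)) - w k)).
  { induction k; intros Hk.
    - simpl. pose proof (Hw 0%nat ltac:(lia)). nra.
    - rewrite wsum_seq_S. pose proof (IHk ltac:(lia)).
      pose proof (Hstep k ltac:(lia)). pose proof (Rle_abs (th (S k) - th k)). nra. }
  pose proof (Hind m (le_n m)). pose proof (Hw m (le_n m)). nra.
Qed.

Lemma chain_tangent_drift d p n r m (g : nat -> vec) :
  Hyp d p -> minkowski d n n = 1 -> minkowski d n p = 0 ->
  (forall i, (i <= m)%nat -> Hyp d (g i)) ->
  (forall i, (i < m)%nat -> hdist d (g i) (g (S i)) <= r) ->
  tangent_ratio d p n (g m) - tangent_ratio d p n (g 0%nat)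
  <= 2 * exp r * wsum (sech_dist d p) (map g (seq 0 (S m))).
Proof.
  intros Hp Hnn Hnp Hg Hr. rewrite wsum_map.
  apply (telescoping_bound (fun i => tangent_ratio d p n (g i))).
  - intros i Hi.
    apply Rle_trans with (- minkowski d (g i) (g (S i))
                          * (sech_dist d p (g i) + sech_dist d p (g (S i)))).
    + apply tangent_ratio_lipschitz; auto; apply Hg; lia.
    + apply Rmult_le_compat_r.
      * pose proof (sech_dist_pos d p (g i) Hp (Hg i ltac:(lia))).
        pose proof (sech_dist_pos d p (g (S i)) Hp (Hg (S i) ltac:(lia))). lra.
      * apply cosh_le_exp_of_hdist_le; auto; apply Hg; lia.
  - intros i Hi. left. now apply sech_dist_pos, Hg.
  - left. apply exp_pos.
Qed.

(* Any exponent below [1/2] would do: the points at [cosh]-distance between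
   [e^J] and [e^(J+1)] from a point lie in a ball of radius [2J+4] and have
   weight [sech_dist <= e^-J], so their total weight decays geometrically in [J]. *)
Definition ball_sizes_bounded (d : nat) (U : vec -> Prop) (T : R) : Prop :=
  forall t, T < t -> forall u, U u ->
  forall l : list vec, NoDup l -> (forall z, In z l -> U z /\ hdist d u z <= t) ->
  INR (length l) <= exp (t / 16).

Lemma length_le_ball_count_sup d U t u l :
  is_finite (ball_count_sup d U t) -> U u -> NoDup l ->
  (forall z, In z l -> U z /\ hdist d u z <= t) ->
  INR (length l) <= real (ball_count_sup d U t).
Proof.
  intros Hfin Hu Hl Hz. unfold ball_count_sup in *.
  match goal with |- context [Lub_Rbar ?E] => destruct (Lub_Rbar_correct E) as [Hub _] end.
  assert (H : Rbar_le (INR (length l)) (ball_count_sup d U t))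
    by (apply Hub; exists u; split; [|exists l; split; [|split]]; auto).
  unfold ball_count_sup in H. rewrite <- Hfin in H. exact H.
Qed.

Lemma subexp_growth_ball_sizes d U : subexp_growth d U -> exists T, ball_sizes_bounded d U T.
Proof.
  intros [Hfin Hlim]. apply is_lim_spec in Hlim.
  destruct (Hlim (mkposreal (1 / 16) ltac:(lra))) as [M HM]. simpl in HM.
  exists (Rmax M 1). intros t Ht u Hu l Hl Hz.
  pose proof (Rmax_l M 1). pose proof (Rmax_r M 1).
  specialize (HM t ltac:(lra)). rewrite Rminus_0_r in HM.
  pose proof (length_le_ball_count_sup d U t u l (Hfin t) Hu Hl Hz) as HN.
  set (N := real (ball_count_sup d U t)) in *.
  destruct l as [|z l]; [simpl; pose proof (exp_pos (t / 16)); lra|].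
  assert (HN1 : 1 <= N)
    by (simpl length in HN; rewrite S_INR in HN; pose proof (pos_INR (length l)); lra).
  assert (Hlog : ln N < t / 16).
  { pose proof (Rle_abs (/ t * ln N)).
    replace (ln N) with (t * (/ t * ln N)) by (field; lra).
    replace (t / 16) with (t * (1 / 16)) by field.
    apply Rmult_lt_compat_l; lra. }
  rewrite <- (exp_ln N) in HN by lra.
  pose proof (exp_increasing _ _ Hlog). lra.
Qed.

Section FarWeight.

Variables (d : nat) (U : vec -> Prop) (p : vec) (T : R).
Hypothesis HU : forall x, U x -> Hyp d x.
Hypothesis Hp : Hyp d p.
Hypothesis Hgrowth : ball_sizes_bounded d U T.

Lemma annulus_length_le J F : T < 2 * J + 4 -> NoDup F ->
  (forall z, In z F -> U z /\ exp J <= - minkowski d z p < exp (J + 1)) ->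
  INR (length F) <= exp ((2 * J + 4) / 16).
Proof.
  intros HT HF Hz. destruct F as [|u F'].
  { simpl. pose proof (exp_pos ((2 * J + 4) / 16)). lra. }
  destruct (Hz u (or_introl eq_refl)) as [Hu [Hu1 Hu2]].
  apply (Hgrowth (2 * J + 4) HT u Hu); auto.
  intros z Hzin. destruct (Hz z Hzin) as [HUz [Hz1 Hz2]]. split; auto.
  apply hdist_le_of_cosh_le; auto.
  pose proof (cosh_triangle_bound d p u z Hp (HU u Hu) (HU z HUz)).
  assert (exp (2 * J + 4) = (exp 1 * exp 1) * (exp (J + 1) * exp (J + 1)))
    by (rewrite <- !exp_plus; f_equal; ring).
  pose proof exp_1_gt_2. pose proof (exp_pos J). pose proof (exp_pos (J + 1)).
  assert (- minkowski d u p * - minkowski d z p <= exp (J + 1) * exp (J + 1))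
    by (apply Rmult_le_compat; lra).
  assert (4 <= exp 1 * exp 1) by nra.
  nra.
Qed.

Lemma annulus_weight_le J F : 0 <= J -> T < 2 * J + 4 -> NoDup F ->
  (forall z, In z F -> U z /\ exp J <= - minkowski d z p < exp (J + 1)) ->
  wsum (sech_dist d p) F <= 9 * (exp (- J / 2) - exp (- (J + 1) / 2)).
Proof.
  intros HJ HT HF Hz.
  assert (Hw : wsum (sech_dist d p) F <= INR (length F) * exp (- J)).
  { apply wsum_le_length. intros z Hzin. destruct (Hz z Hzin) as [_ [H1 _]].
    unfold sech_dist. rewrite exp_Ropp. apply Rinv_le_contravar; auto. apply exp_pos. }
  pose proof (annulus_length_le J F HT HF Hz) as Hlen.
  assert (Hhalf : exp (- (1 / 2)) <= 2 / 3).
  { pose proof (exp_ineq1 (1 / 2) ltac:(lra)). rewrite exp_Ropp.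
    replace (2 / 3) with (/ (3 / 2)) by field. apply Rinv_le_contravar; lra. }
  assert (Hquarter : exp (1 / 4) <= 3)
    by (pose proof exp_le_3; pose proof (exp_le_compat (1 / 4) 1 ltac:(lra)); lra).
  assert (E1 : exp ((2 * J + 4) / 16) * exp (- J)
               = exp (1 / 4) * exp (- J / 2) * exp (- (3 * J / 8)))
    by (rewrite <- !exp_plus; f_equal; field).
  assert (E2 : exp (- (J + 1) / 2) = exp (- J / 2) * exp (- (1 / 2)))
    by (rewrite <- exp_plus; f_equal; field).
  assert (E3 : exp (- (3 * J / 8)) <= 1) by (rewrite <- exp_0; apply exp_le_compat; lra).
  pose proof (exp_pos (- J / 2)). pose proof (exp_pos (- (3 * J / 8))).
  pose proof (exp_pos (1 / 4)). pose proof (exp_pos (- J)).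
  assert (INR (length F) * exp (- J) <= exp ((2 * J + 4) / 16) * exp (- J))
    by (apply Rmult_le_compat_r; lra).
  assert (exp (1 / 4) * exp (- J / 2) * exp (- (3 * J / 8)) <= 3 * exp (- J / 2))
    by (rewrite Rmult_assoc; rewrite <- (Rmult_1_r (3 * exp (- J / 2))), Rmult_assoc;
        apply Rmult_le_compat; nra).
  rewrite E2. nra.
Qed.

Lemma levels_weight_le N J F : 0 <= J -> T < 2 * J + 4 -> NoDup F ->
  (forall z, In z F -> U z /\ exp J <= - minkowski d z p < exp (J + INR N)) ->
  wsum (sech_dist d p) F <= 9 * (exp (- J / 2) - exp (- (J + INR N) / 2)).
Proof.
  revert J F. induction N as [|N IH]; intros J F HJ HT HF Hz.
  - destruct F as [|z F']; [simpl; rewrite Rplus_0_r; lra|].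
    destruct (Hz z (or_introl eq_refl)) as [_ [H1 H2]].
    simpl in H2. rewrite Rplus_0_r in H2. lra.
  - set (b := fun z => if Rlt_dec (- minkowski d z p) (exp (J + 1)) then true else false).
    rewrite (wsum_filter _ b F).
    assert (H1 : wsum (sech_dist d p) (filter b F) <= 9 * (exp (- J / 2) - exp (- (J + 1) / 2))).
    { apply annulus_weight_le; auto using NoDup_filter.
      intros z Hzin. apply filter_In in Hzin as [Hzin Hb].
      destruct (Hz z Hzin) as [Uz [A1 A2]]. unfold b in Hb.
      destruct (Rlt_dec (- minkowski d z p) (exp (J + 1))); [auto | discriminate]. }
    assert (H2 : wsum (sech_dist d p) (filter (fun z => negb (b z)) F)
                 <= 9 * (exp (- (J + 1) / 2) - exp (- ((J + 1) + INR N) / 2))).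
    { apply IH; try lra; auto using NoDup_filter.
      intros z Hzin. apply filter_In in Hzin as [Hzin Hb].
      destruct (Hz z Hzin) as [Uz [A1 A2]]. unfold b in Hb.
      destruct (Rlt_dec (- minkowski d z p) (exp (J + 1))); [discriminate|].
      rewrite S_INR in A2. repeat split; auto; [lra|].
      now replace (J + 1 + INR N) with (J + (INR N + 1)) by ring. }
    rewrite S_INR. replace (- (J + (INR N + 1)) / 2) with (- ((J + 1) + INR N) / 2) by field.
    lra.
Qed.

Lemma far_weight_le J F : 0 <= J -> T < 2 * J + 4 -> NoDup F ->
  (forall z, In z F -> U z /\ exp J <= - minkowski d z p) ->
  wsum (sech_dist d p) F <= 9 * exp (- J / 2).
Proof.
  intros HJ HT HF Hz.
  assert (Hbound : exists M, forall z, In z F -> - minkowski d z p <= M).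
  { clear Hz HF. induction F as [|a F [M HM]]; [exists 0; intros z []|].
    exists (Rmax (- minkowski d a p) M). intros z [<-|Hz]; [apply Rmax_l|].
    apply Rle_trans with M; [auto | apply Rmax_r]. }
  destruct Hbound as [M HM].
  destruct (INR_archimed 1 M ltac:(lra)) as [N HN].
  pose proof (exp_pos (- (J + INR N) / 2)).
  enough (wsum (sech_dist d p) F <= 9 * (exp (- J / 2) - exp (- (J + INR N) / 2))) by lra.
  apply levels_weight_le; auto.
  intros z Hzin. destruct (Hz z Hzin) as [Uz Hz1]. repeat split; auto.
  pose proof (HM z Hzin). pose proof (exp_ineq1_le (J + INR N)). lra.
Qed.

End FarWeight.

Lemma in_map_seq_forall {A : Type} (P : A -> Prop) (g : nat -> A) m :
  (forall i, (i <= m)%nat -> P (g i)) -> forall z, In z (map g (seq 0 (S m))) -> P z.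
Proof.
  intros H z Hz. apply in_map_iff in Hz as [i [<- Hi]]. apply in_seq in Hi. apply H. lia.
Qed.

Lemma sqrt_sq_sub_1_div_ge_half w : 2 <= w -> 1 / 2 <= sqrt (w * w - 1) / w.
Proof.
  intros Hw. destruct (sqrt_sq_sub_1_bounds w ltac:(lra)) as [Hs1 [Hs2 _]].
  apply (Rmult_le_reg_r w); [lra|].
  replace (sqrt (w * w - 1) / w * w) with (sqrt (w * w - 1)) by (field; lra).
  nra.
Qed.

Lemma geodesic_tangent_ratio_gap d x y p : Hyp d x -> Hyp d y -> Hyp d p ->
  hdist d x p + hdist d p y = hdist d x y ->
  2 <= - minkowski d x p -> 2 <= - minkowski d y p ->
  exists n, minkowski d n n = 1 /\ minkowski d n p = 0 /\
    1 <= tangent_ratio d p n y - tangent_ratio d p n x.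
Proof.
  intros Hx Hy Hp Hadd HA HB.
  destruct (geodesic_unit_tangent d x y p Hx Hy Hp Hadd ltac:(lra))
    as [n [Hnn [Hnp [Hxn Hyn]]]].
  exists n. split; [|split]; auto.
  unfold tangent_ratio. rewrite Hxn, Hyn, (minkowski_comm d y p) in *.
  pose proof (sqrt_sq_sub_1_div_ge_half _ HA). pose proof (sqrt_sq_sub_1_div_ge_half _ HB).
  unfold Rdiv in *. lra.
Qed.

Lemma exists_scale T r : exists J, 1 <= J /\ T < 2 * J + 4 /\ 18 * exp r * exp (- J / 2) < 1.
Proof.
  set (J := Rmax 1 (Rmax T (2 * (ln 18 + r))) + 1).
  pose proof (Rmax_l 1 (Rmax T (2 * (ln 18 + r)))).
  pose proof (Rmax_r 1 (Rmax T (2 * (ln 18 + r)))).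
  pose proof (Rmax_l T (2 * (ln 18 + r))). pose proof (Rmax_r T (2 * (ln 18 + r))).
  exists J. split; [|split]; [unfold J; lra ..|].
  assert (Hlt : exp (- J / 2) < exp (- (ln 18 + r))) by (apply exp_increasing; unfold J; lra).
  rewrite exp_Ropp, exp_plus, exp_ln in Hlt by lra.
  pose proof (exp_pos r).
  apply Rmult_lt_compat_l with (r := 18 * exp r) in Hlt; [|lra].
  rewrite Rinv_r in Hlt; nra.
Qed.

Theorem lemma5p1 (d : nat) (U : vec -> Prop) (r : R) :
  (forall x, U x -> Hyp d x) ->
  uniformly_discrete d U ->
  r_connected d r U ->
  subexp_growth d U ->
  exists s : R,
    forall (x y : vec) (m : nat) (f : nat -> vec),
      r_chain d r U x y m f ->
      forall p, on_geodesic d x y p ->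
      exists i, (i <= m)%nat /\ hdist d (f i) p <= s.
Proof.
  intros HU _ _ Hsub.
  destruct (subexp_growth_ball_sizes d U Hsub) as [T HT].
  destruct (exists_scale T r) as [J [HJ1 [HJT HJr]]].
  exists (J + 1). intros x y m f [Hf0 [Hfm [HfU Hfr]]] p Hgeo.
  apply NNPP. intro Hnear.
  assert (Hfar : forall i, (i <= m)%nat -> U (f i) /\ J + 1 < hdist d (f i) p).
  { intros i Hi. split; [auto|]. apply Rnot_le_lt. intro. apply Hnear. eauto. }
  destruct (on_geodesic_split d x y p Hgeo) as [Hp Hadd].
  destruct (loop_erasure (fun z => U z /\ J + 1 < hdist d z p)
              (fun z z' => hdist d z z' <= r) m f Hfar Hfr)
    as [m' [g [Hg0 [Hgm [Hg [Hgr Hnd]]]]]].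
  rewrite Hf0 in Hg0. rewrite Hfm in Hgm.
  assert (HgU : forall i, (i <= m')%nat -> U (g i) /\ exp J <= - minkowski d (g i) p).
  { intros i Hi. destruct (Hg i Hi) as [Ui Hi']. split; [auto|].
    left. apply exp_lt_cosh_of_hdist_gt; auto. }
  assert (HeJ : 2 <= exp J) by (pose proof exp_1_gt_2; pose proof (exp_le_compat 1 J HJ1); lra).
  destruct (HgU 0%nat (Nat.le_0_l m')) as [Ux Hxfar]. rewrite Hg0 in Ux, Hxfar.
  destruct (HgU m' (le_n m')) as [Uy Hyfar]. rewrite Hgm in Uy, Hyfar.
  destruct (geodesic_tangent_ratio_gap d x y p (HU x Ux) (HU y Uy) Hp Hadd ltac:(lra) ltac:(lra))
    as [n [Hnn [Hnp Hgap]]].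
  pose proof (chain_tangent_drift d p n r m' g Hp Hnn Hnp
                (fun i Hi => HU _ (proj1 (HgU i Hi))) Hgr) as Hdrift.
  rewrite Hgm, Hg0 in Hdrift.
  pose proof (far_weight_le d U p T HU Hp HT J _ ltac:(lra) ltac:(lra) Hnd
                (in_map_seq_forall _ g m' HgU)) as Hweight.
  pose proof (exp_pos r). nra.
Qed.
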